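(* Let Assumptions (A1) and (A2) below hold, let $T>0$, and let $M:=\inf_{x\in X\setminus\mathcal{N}}\ell^{\star}(x)$, where $\mathcal{N}$ and $\gamma$ are as in (A2). Then for each $C\in\mathbb{R}_{>0}$ such that $\mathcal{N}\cap X\subseteq V_T^{-1}[0,C]$, the inequality \[ V_T(x)\le \beta\,\ell^{\star}(x)\qquad\forall\,x\in V_T^{-1}[0,C] \] holds with $\beta:=\max\{C/M,\gamma\}$. (A1): there exist class-$\mathcal{K}_\infty$ functions $\underline{\eta},\overline{\eta}$ with $\underline{\eta}(|x-\bar x|)\le \ell^{\star}(x)\le\overline{\eta}(|x-\bar x|)$ for all $x\in X$. (A2): there exist $\gamma\in\mathbb{R}_{>0}$ and a neighbourhood $\mathcal{N}$ of $\bar x$ such that $V_\infty(x)\le\gamma\,\ell^{\star}(x)$ for all $x\in\mathcal{N}\cap X$.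
   Context: Consider the control system $\dot x(t)=f(x(t),u(t))$, $x(0)=x_0$, with $f:\mathbb{R}^n\times\mathbb{R}^m\to\mathbb{R}^n$ continuous and locally Lipschitz in its first argument on $\mathbb{R}^n\setminus\{0\}$; for $u\in L^\infty_{\mathrm{loc}}(\mathbb{R}_{\ge0},\mathbb{R}^m)$ the unique (maximal) solution is denoted $x(t;x_0,u)$. A set $\mathcal{E}\subseteq\mathbb{R}^n\times\mathbb{R}^m$ defines the constraints $(x(t),u(t))\in\mathcal{E}$. Let $U(x):=\{u\in\mathbb{R}^m:(x,u)\in\mathcal{E}\}$ and $X:=\{x: U(x)\neq\emptyset\}$ (the projection of $\mathcal{E}$ onto $\mathbb{R}^n$). For $x_0\in X$ and $T>0$, $\mathcal{U}_T(x_0)$ is the set of $u\in L^\infty_{\mathrm{loc}}(\mathbb{R}_{\ge0},\mathbb{R}^m)$ such that the solution exists and satisfies $(x(t;x_0,u),u(t))\in\mathcal{E}$ on $[0,T]$; $\mathcal{U}_\infty(x_0)$ is defined analogously for all $t\ge0$. The stage cost $\ell:\mathbb{R}^n\times\mathbb{R}^m\to\mathbb{R}_{\ge0}$ is continuous; $J_T(x_0,u):=\int_0^T\ell(x(s;x_0,u),u(s))\,\mathrm{d}s$, $V_T(x_0):=\inf_{u\in\mathcal{U}_T(x_0)}J_T(x_0,u)$ (with $V_T(x_0)=+\infty$ if $\mathcal{U}_T(x_0)=\emptyset$), and $V_\infty$ is defined analogously with the infinite-horizon cost over $\mathcal{U}_\infty(x_0)$. $V_T^{-1}[0,C]:=\{x\in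 X: V_T(x)\le C\}$. $\ell^{\star}(x):=\inf_{u\in U(x)}\ell(x,u)$. The point $\bar x\in X$ is a controlled equilibrium: there is $\bar u\in U(\bar x)$ with $f(\bar x,\bar u)=0$. *)

From HB Require Import structures.
From mathcomp Require Import all_boot all_order all_algebra.
From mathcomp Require Import all_classical all_reals all_analysis.
Set Implicit Arguments. Unset Strict Implicit. Unset Printing Implicit Defensive.
Import Order.TTheory GRing.Theory Num.Theory.
Import numFieldNormedType.Exports.
Local Open Scope classical_set_scope.
Local Open Scope ring_scope.

Section ControlDefs.
Context {R : realType} {n m : nat}.
Local Notation leb := (@lebesgue_measure R).

Definition enorm {k : nat} (x : 'rV[R]_k) : R := Num.sqrt (\sum_i x ord0 i ^+ 2).

Definition classKinf (eta : R -> R) : Prop :=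
  [/\ eta 0 = 0,
      {within (`[0, +oo[%classic : set R), continuous eta},
      (forall a b, 0 <= a -> a < b -> eta a < eta b) &
      (forall B, exists r, 0 <= r /\ B < eta r)].

(* u in L^infty_loc(R_{>=0}, R^m) (values for t<0 are irrelevant) *)
Definition Linf_loc (u : R -> 'rV[R]_m) : Prop :=
  (forall j, measurable_fun (`[0, +oo[%classic : set R) (fun t => u t ord0 j)) /\
  (forall T, 0 < T -> exists B : R,
     {ae leb, forall t, (`[0, T]%classic : set R) t -> enorm (u t) <= B}).

Definition horizon (Tmax : \bar R) : set R := [set t | 0 <= t /\ (t%:E <= Tmax)%E].

Definition is_solution (f : 'rV[R]_n -> 'rV[R]_m -> 'rV[R]_n)
    (x0 : 'rV[R]_n) (u : R -> 'rV[R]_m) (x : R -> 'rV[R]_n) (Tmax : \bar R) : Prop :=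
  x 0 = x0 /\
  forall t, horizon Tmax t -> forall i,
    leb.-integrable (`[0, t]%classic : set R) (fun s => (f (x s) (u s) ord0 i)%:E) /\
    x t ord0 i = x0 ord0 i + \int[leb]_(s in (`[0, t]%classic : set R)) f (x s) (u s) ord0 i.

Definition unique_solutions (f : 'rV[R]_n -> 'rV[R]_m -> 'rV[R]_n) : Prop :=
  forall x0 u, Linf_loc u -> forall x y Tmax,
    is_solution f x0 u x Tmax -> is_solution f x0 u y Tmax ->
    forall t, horizon Tmax t -> x t = y t.

Definition loc_lipschitz_x (f : 'rV[R]_n -> 'rV[R]_m -> 'rV[R]_n) : Prop :=
  forall z : 'rV[R]_n, z != 0 -> forall B : R, exists r : R, exists L : R,
    0 < r /\ forall x y v, enorm (x - z) < r -> enorm (y - z) < r -> enorm v <= B ->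
      enorm (f x v - f y v) <= L * enorm (x - y).

Variables (f : 'rV[R]_n -> 'rV[R]_m -> 'rV[R]_n) (E : set ('rV[R]_n * 'rV[R]_m))
          (ell : 'rV[R]_n -> 'rV[R]_m -> R).

Definition Uset (x : 'rV[R]_n) : set 'rV[R]_m := [set u | E (x, u)].
Definition Xset : set 'rV[R]_n := [set x | exists u, E (x, u)].

(* value function V_T (Tmax = T%:E) or V_infty (Tmax = +oo); inf over empty = +oo *)
Definition Vfun (Tmax : \bar R) (x0 : 'rV[R]_n) : \bar R :=
  ereal_inf [set J | exists u x, [/\ Linf_loc u, is_solution f x0 u x Tmax,
      (forall t, horizon Tmax t -> E (x t, u t)) &
      J = (\int[leb]_(s in horizon Tmax) (ell (x s) (u s))%:E)%E]].

Definition ellstar (x : 'rV[R]_n) : \bar R :=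
  ereal_inf [set (ell x u)%:E | u in Uset x].

Definition sublevel (T C : R) : set 'rV[R]_n :=
  [set x | Xset x /\ (Vfun T%:E x <= C%:E)%E].

End ControlDefs.

(* beta := max{C/M, gamma}, with the convention C/(+oo) = 0 *)
Definition beta {R : realType} (C : R) (M : \bar R) (gamma : R) : R :=
  match M with
  | EFin r => Num.max (C / r) gamma
  | _ => gamma
  end.

From HB Require Import structures.
From mathcomp Require Import all_boot all_order all_algebra.
From mathcomp Require Import all_classical all_reals all_analysis.
Import Order.TTheory GRing.Theory Num.Theory.
Import numFieldNormedType.Exports.
Set Implicit Arguments. Unset Strict Implicit. Unset Printing Implicit Defensive.
Local Open Scope classical_set_scope.
Local Open Scope ring_scope.

(* Near [xbar], (A2) and [V_T <= V_oo] give [V_T <= gamma ell*]. Away from the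
   neighbourhood N, (A1) keeps [ell*] above [M >= eta1 d > 0], where [d] is the
   radius of a ball around [xbar] inside N; there [V_T <= C = (C/M) M <= (C/M) ell*].
   Only the lower bound in (A1) and the nonnegativity of [ell] are needed. *)

(* Unlike [ge0_subset_integral], no measurability is assumed: the running costs
   along the trajectories in [Vfun] are not known to be measurable. *)
Lemma ge0_subset_integral_le d (T : measurableType d) (R : realType)
    (mu : measure T R) (A B : set T) (g : T -> \bar R) :
  A `<=` B -> (forall x, B x -> (0 <= g x)%E) ->
  (\int[mu]_(x in A) g x <= \int[mu]_(x in B) g x)%E.
Proof.
move=> AB g0; rewrite !ge0_integralE//; last by move=> x /AB; apply: g0.
apply: ereal_sup_le => _ [h hle <-]; exists h => //= x.
apply: (le_trans (hle x)); rewrite /patch.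
case: ifPn => [/[!inE] /AB Bx|_]; first by rewrite ifT ?inE.
by case: ifPn => [/[!inE] /g0 //|_].
Qed.

Section ValueFunction.
Context {R : realType} {n m : nat}.
Variables (f : 'rV[R]_n -> 'rV[R]_m -> 'rV[R]_n) (E : set ('rV[R]_n * 'rV[R]_m))
          (ell : 'rV[R]_n -> 'rV[R]_m -> R).
Hypothesis ell_ge0 : forall x u, 0 <= ell x u.

Lemma horizon_subset (T1 T2 : \bar R) : (T1 <= T2)%E -> horizon T1 `<=` horizon T2.
Proof. by move=> T12 t [t0 tT1]; split => //; apply: le_trans T12. Qed.

Lemma le_Vfun (T1 T2 : \bar R) x :
  (T1 <= T2)%E -> (Vfun f E ell T1 x <= Vfun f E ell T2 x)%E.
Proof.
move=> /horizon_subset T12; apply: le_ereal_inf_tmp => _ [u [y [Lu [y0 sol] adm ->]]].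
have le_int := ge0_subset_integral_le lebesgue_measure T12
  (g := fun s => (ell (y s) (u s))%:E).
apply: le_trans _ (le_int _); last by move=> s _; rewrite lee_fin.
apply: ereal_inf_lbound; exists u, y; split => //.
- by split => // t /T12; apply: sol.
- by move=> t /T12; apply: adm.
Qed.

Lemma ellstar_ge0 x : (0 <= ellstar E ell x)%E.
Proof. by apply: le_ereal_inf_tmp => _ [u _ <-]; rewrite lee_fin. Qed.

Lemma ellstar_fin_num x : Xset E x -> ellstar E ell x \is a fin_num.
Proof.
case=> u Eu; rewrite ge0_fin_numE ?ellstar_ge0//.
by apply: le_lt_trans (ltry (ell x u)); apply: ereal_inf_lbound; exists u.
Qed.

End ValueFunction.

Lemma coord_le_enorm (R : realType) k (v : 'rV[R]_k) j : `|v ord0 j| <= enorm v.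
Proof.
rewrite /enorm -sqrtr_sqr ler_sqrt; last by rewrite sumr_ge0 // => i _; exact: sqr_ge0.
by rewrite (bigD1 j) //= lerDl; apply: sumr_ge0 => i _; exact: sqr_ge0.
Qed.

Lemma nbhs_enorm_ge (R : realType) k (x : 'rV[R]_k) (N : set 'rV[R]_k) :
  nbhs x N -> exists2 d, 0 < d & forall y, ~ N y -> d <= enorm (y - x).
Proof.
move=> /nbhs_ballP[d d0 dN]; exists d => // y Ny; rewrite leNgt; apply/negP => yd.
apply: Ny; apply: dN; split => // i j; rewrite /ball /= distrC (ord1 i).
by apply: le_lt_trans yd; have := coord_le_enorm (y - x) j; rewrite !mxE.
Qed.

Section ClassKinf.
Context {R : realType} (eta : R -> R).
Hypothesis eta_Kinf : classKinf eta.

Lemma classKinf_le a b : 0 <= a -> a <= b -> eta a <= eta b.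
Proof.
case: eta_Kinf => _ _ eta_incr _ a0; rewrite le_eqVlt => /orP[/eqP <-//|ab].
exact/ltW/eta_incr.
Qed.

Lemma classKinf_gt0 a : 0 < a -> 0 < eta a.
Proof. by case: eta_Kinf => eta0 _ eta_incr _ a0; rewrite -eta0 eta_incr. Qed.

End ClassKinf.

Lemma beta_ge_gamma (R : realType) (C : R) (M : \bar R) (gamma : R) :
  gamma <= beta C M gamma.
Proof. by case: M => [r| |] //=; rewrite le_max lexx orbT. Qed.

Lemma le_beta_mul (R : realType) (C r e gamma : R) (M : \bar R) :
  0 <= C -> 0 < r -> (r%:E <= M)%E -> (M <= e%:E)%E -> C <= beta C M gamma * e.
Proof.
case: M => [s| |] //= C0 r0; rewrite !lee_fin => rs se.
have s0 : 0 < s by apply: lt_le_trans rs.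
apply: (@le_trans _ _ (C / s * e)); last first.
  by apply: ler_wpM2r; [exact: le_trans (ltW s0) se | rewrite le_max lexx].
by rewrite -{1}(divfK (lt0r_neq0 s0) C) ler_wpM2l // divr_ge0 // ltW.
Qed.

Theorem proposition1 (R : realType) (n m : nat)
  (f : 'rV[R]_n -> 'rV[R]_m -> 'rV[R]_n) (E : set ('rV[R]_n * 'rV[R]_m))
  (ell : 'rV[R]_n -> 'rV[R]_m -> R) (xbar : 'rV[R]_n) :
  continuous (fun p : 'rV[R]_n * 'rV[R]_m => f p.1 p.2) ->
  loc_lipschitz_x f ->
  unique_solutions f ->
  continuous (fun p : 'rV[R]_n * 'rV[R]_m => ell p.1 p.2) ->
  (forall x u, 0 <= ell x u) ->
  (exists2 ubar, E (xbar, ubar) & f xbar ubar = 0) ->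
  (* (A1) *)
  (exists eta1 eta2 : R -> R, [/\ classKinf eta1, classKinf eta2 &
     forall x, Xset E x ->
       ((eta1 (enorm (x - xbar)))%:E <= ellstar E ell x)%E /\
       (ellstar E ell x <= (eta2 (enorm (x - xbar)))%:E)%E]) ->
  (* (A2) *)
  forall (gamma : R) (N : set 'rV[R]_n), 0 < gamma -> nbhs xbar N ->
  (forall x, N x -> Xset E x -> (Vfun f E ell +oo x <= gamma%:E * ellstar E ell x)%E) ->
  forall T : R, 0 < T ->
  let M := ereal_inf [set ellstar E ell x | x in Xset E `\` N] in
  forall C : R, 0 < C ->
  N `&` Xset E `<=` sublevel f E ell T C ->
  forall x, sublevel f E ell T C x ->
    (Vfun f E ell T%:E x <= (beta C M gamma)%:E * ellstar E ell x)%E.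
Proof.
move=> _ _ _ _ ell0 _ [eta1 [eta2 [eta1K _ A1]]] gamma N _ xbarN A2 T _ M C C0 _
  x [Xx VTx].
have [Nx|Nx] := pselect (N x).
  apply: le_trans (le_Vfun f E ell0 x (leey T%:E)) _.
  apply: le_trans (A2 x Nx Xx) _.
  by apply: lee_wpmul2r; [exact: ellstar_ge0 | rewrite lee_fin beta_ge_gamma].
have [d d0 far] := nbhs_enorm_ge xbarN.
have eta1d_le_M : ((eta1 d)%:E <= M)%E.
  apply: le_ereal_inf_tmp => _ [y [Xy Ny] <-]; apply: le_trans (proj1 (A1 y Xy)).
  by rewrite lee_fin classKinf_le ?far// ltW.
have M_le_ellstar : (M <= ellstar E ell x)%E by apply: ereal_inf_lbound; exists x.
have ellstar_x_fin := ellstar_fin_num ell0 Xx.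
apply: (le_trans VTx); rewrite -(fineK ellstar_x_fin) -EFinM lee_fin.
apply: (le_beta_mul gamma (ltW C0) (classKinf_gt0 eta1K d0) eta1d_le_M).
by rewrite fineK.
Qed.
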